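(* Let $\mathcal H_A,\mathcal H_B$ be finite-dimensional Hilbert spaces and $U$ a unitary on $\mathcal H_A\otimes\mathcal H_B$. Then $U$ is a generalized thermal unitary if and only if there exist full-rank density operators $\alpha$ on $\mathcal H_A$ and $\beta$ on $\mathcal H_B$, not both maximally mixed, and density operators $\alpha'$ on $\mathcal H_A$, $\beta'$ on $\mathcal H_B$, such that $U(\alpha\otimes\beta)U^\dagger=\alpha'\otimes\beta'$.
   Context: A unitary $U$ on $\mathcal H_A\otimes\mathcal H_B$ is a generalized thermal unitary if there exist Hermitian operators $H_A,H_A'$ on $\mathcal H_A$ and $H_B,H_B'$ on $\mathcal H_B$, with at least one of $H_A,H_B$ not proportional to the identity, such that $U(H_A\otimes\mathbb 1+\mathbb 1\otimes H_B)U^\dagger=H_A'\otimes\mathbb 1+\mathbb 1\otimes H_B'$. *)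

From HB Require Import structures.
From mathcomp Require Import all_boot all_order all_algebra.
From mathcomp Require Import complex mxtens.
From mathcomp Require Import reals.

Set Implicit Arguments.
Unset Strict Implicit.
Unset Printing Implicit Defensive.

Import Order.TTheory GRing.Theory Num.Theory.
Local Open Scope ring_scope.
Local Open Scope complex_scope.

(* The complex numbers: C = R[i] for an arbitrary realType R
   (every realType is a complete archimedean ordered field, i.e. a copy of ℝ). *)

Definition adjmx (C : numClosedFieldType) (m n : nat) (A : 'M[C]_(m, n)) : 'M[C]_(n, m) :=
  (map_mx Num.conj A)^T.

Definition hermitian (C : numClosedFieldType) (n : nat) (A : 'M[C]_n) : Prop :=
  adjmx A = A.

Definition unitary (C : numClosedFieldType) (n : nat) (U : 'M[C]_n) : Prop :=
  U *m adjmx U = 1%:M /\ adjmx U *m U = 1%:M.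

Definition psd (C : numClosedFieldType) (n : nat) (A : 'M[C]_n) : Prop :=
  hermitian A /\ forall v : 'cV[C]_n, 0 <= (adjmx v *m A *m v) 0 0.

Definition density (C : numClosedFieldType) (n : nat) (A : 'M[C]_n) : Prop :=
  psd A /\ \tr A = 1.

Definition full_rank (C : numClosedFieldType) (n : nat) (A : 'M[C]_n) : Prop :=
  \rank A = n.

Definition maximally_mixed (C : numClosedFieldType) (n : nat) (A : 'M[C]_n) : Prop :=
  A = (n%:R)^-1%:M.

Definition prop_to_id (C : numClosedFieldType) (n : nat) (A : 'M[C]_n) : Prop :=
  exists c : C, A = c%:M.

(* generalized thermal unitary on C^m ⊗ C^n (tensor product = Kronecker product) *)
Definition gen_thermal_unitary (C : numClosedFieldType) (m n : nat)
  (U : 'M[C]_(m * n)) : Prop :=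
  exists (HA HA' : 'M[C]_m) (HB HB' : 'M[C]_n),
    hermitian HA /\ hermitian HA' /\ hermitian HB /\ hermitian HB' /\
    (~ prop_to_id HA \/ ~ prop_to_id HB) /\
    U *m (HA *t (1%:M : 'M[C]_n) + (1%:M : 'M[C]_m) *t HB) *m adjmx U
      = HA' *t (1%:M : 'M[C]_n) + (1%:M : 'M[C]_m) *t HB'.

From Pilot Require Import Defs.
From HB Require Import structures.
From mathcomp Require Import all_boot all_order all_algebra.
From mathcomp Require Import complex mxtens.
From mathcomp Require Import reals sequences exp.
From mathcomp Require Import sesquilinear spectral.

(* Both directions apply a function to an intertwining relation [U X U^† = X'].
   A Hermitian [X = P^† diag(d) P] with [P] unitary has [f(X) = P^† diag(f d) P],
   and [W diag(d) = diag(e) W] implies [W diag(f d) = diag(f e) W], because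
   [W_ij <> 0] forces [d_j = e_i].  In the product basis [P_A ⊗ P_B] the
   operator [H_A ⊗ 1 + 1 ⊗ H_B] has eigenvalues [a_i + b_j] and [α ⊗ β] has
   eigenvalues [a_i b_j], so [exp] carries the first relation to one between
   Gibbs product states and [ln] carries the second back.  The Gibbs states are
   both maximally mixed only when [H_A] and [H_B] are both scalar, and [α' ⊗ β']
   inherits invertibility from [α ⊗ β], so that [ln α'] and [ln β'] make sense. *)

Set Implicit Arguments.
Unset Strict Implicit.
Unset Printing Implicit Defensive.

Import Order.TTheory GRing.Theory Num.Theory.
Local Open Scope ring_scope.
Local Open Scope complex_scope.

Section Operators.
Variable C : numClosedFieldType.

(** * Adjoints, unitaries and Kronecker products *)

Lemma adjmxM m n p (A : 'M[C]_(m, n)) (B : 'M[C]_(n, p)) :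
  adjmx (A *m B) = adjmx B *m adjmx A.
Proof. by rewrite /adjmx map_mxM trmx_mul. Qed.

Lemma adjmxK m n (A : 'M[C]_(m, n)) : adjmx (adjmx A) = A.
Proof. by apply/matrixP => i j; rewrite !mxE conjCK. Qed.

Lemma adjmx_tens m n p q (A : 'M[C]_(m, n)) (B : 'M[C]_(p, q)) :
  adjmx (A *t B) = adjmx A *t adjmx B.
Proof. by apply/matrixP => i j; rewrite !mxE rmorphM. Qed.

Lemma adjmx_diag n (d : 'rV[C]_n) : adjmx (diag_mx d) = diag_mx (map_mx Num.conj d).
Proof.
by apply/matrixP => i j; rewrite !mxE; case: eqVneq => [->|_]; rewrite ?rmorph0.
Qed.

Lemma adjmxE m n (A : 'M[C]_(m, n)) : adjmx A = map_mx Num.conj A^T.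
Proof. exact: map_trmx. Qed.

Lemma unitary_adj n (U : 'M[C]_n) : unitary U -> unitary (adjmx U).
Proof. by rewrite /unitary adjmxK => -[]. Qed.

Lemma unitary_unit n (U : 'M[C]_n) : unitary U -> U \in unitmx.
Proof. by case=> /mulmx1_unit []. Qed.

Lemma unitary_tens m n (P : 'M[C]_m) (Q : 'M[C]_n) :
  unitary P -> unitary Q -> unitary (P *t Q).
Proof.
move=> [P1 P2] [Q1 Q2].
have tens11 : (1%:M : 'M[C]_m) *t (1%:M : 'M[C]_n) = 1%:M.
  apply/matrixP => k l; rewrite !mxE -natrM mulnb -xpair_eqE.
  by rewrite (inj_eq (can_inj (@mxtens_unindexK m n))).
by rewrite /unitary adjmx_tens !tensmx_mul P1 P2 Q1 Q2 tens11.
Qed.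

Lemma unitary_conjP n (U X Y : 'M[C]_n) :
  unitary U -> U *m X *m adjmx U = Y <-> U *m X = Y *m U.
Proof.
case=> U1 U2; split=> [<-|->]; last by rewrite -mulmxA U1 mulmx1.
by rewrite -mulmxA U2 mulmx1.
Qed.

Lemma mxtrace_unitary_conj n (U X : 'M[C]_n) :
  unitary U -> \tr (U *m X *m adjmx U) = \tr X.
Proof. by case=> _ U2; rewrite mxtrace_mulC mulmxA U2 mul1mx. Qed.

Lemma full_rank_unitmx n (A : 'M[C]_n) : full_rank A <-> A \in unitmx.
Proof. by rewrite -row_full_unit /row_full /full_rank; split => /eqP. Qed.

Lemma prop_to_idZ n (c : C) (A : 'M[C]_n) :
  c != 0 -> prop_to_id (c *: A) -> prop_to_id A.
Proof.
move=> c_neq0 [k Ek]; exists (c^-1 * k).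
by rewrite -(scalerK c_neq0 A) Ek scale_scalar_mx.
Qed.

Lemma scalar_maximally_mixed n (A : 'M[C]_n) :
  \tr A = 1 -> prop_to_id A -> maximally_mixed A.
Proof.
move=> trA [c Ec]; move: trA; rewrite /maximally_mixed Ec mxtrace_scalar => cn1.
have n_neq0 : (n%:R : C) != 0.
  by apply/eqP => n0; move: cn1; rewrite -mulr_natr n0 mulr0 => /esym/eqP; rewrite oner_eq0.
by congr (_%:M); apply: (mulIf n_neq0); rewrite mulVf // mulr_natr.
Qed.

Definition kronsum m n (A : 'M[C]_m) (B : 'M[C]_n) : 'M[C]_(m * n) :=
  A *t 1%:M + 1%:M *t B.

Definition rv_tens m n (d : 'rV[C]_m) (e : 'rV[C]_n) : 'rV[C]_(m * n) :=
  \row_k (d 0 (mxtens_unindex k).1 * e 0 (mxtens_unindex k).2).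

Definition rv_kronsum m n (d : 'rV[C]_m) (e : 'rV[C]_n) : 'rV[C]_(m * n) :=
  \row_k (d 0 (mxtens_unindex k).1 + e 0 (mxtens_unindex k).2).

Lemma rv_tensE m n (d : 'rV[C]_m) (e : 'rV[C]_n) i j :
  rv_tens d e 0 (mxtens_index (i, j)) = d 0 i * e 0 j.
Proof. by rewrite mxE mxtens_indexK. Qed.

Lemma diag_mx_tens m n (d : 'rV[C]_m) (e : 'rV[C]_n) :
  diag_mx d *t diag_mx e = diag_mx (rv_tens d e).
Proof.
apply/matrixP => k l; case: (mxtens_indexP k) => i j; case: (mxtens_indexP l) => i' j'.
rewrite tensmxE [RHS]mxE rv_tensE (inj_eq (can_inj (@mxtens_indexK m n))) !mxE.
by rewrite xpair_eqE; case: (i == i'); case: (j == j'); rewrite ?mulr0n ?mulr0 ?mul0r.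
Qed.

Lemma diag_mx_kronsum m n (d : 'rV[C]_m) (e : 'rV[C]_n) :
  kronsum (diag_mx d) (diag_mx e) = diag_mx (rv_kronsum d e).
Proof.
apply/matrixP => k l; case: (mxtens_indexP k) => i j; case: (mxtens_indexP l) => i' j'.
rewrite mxE !tensmxE [RHS]mxE (inj_eq (can_inj (@mxtens_indexK m n))) !mxE.
rewrite mxtens_indexK xpair_eqE /=.
by case: (i == i'); case: (j == j');
  rewrite ?mulr0n ?mulr0 ?mul0r ?mulr1 ?mul1r ?addr0 ?mulrnDl.
Qed.

Lemma map_rv_kronsum m n (f : C -> C) (d : 'rV[C]_m) (e : 'rV[C]_n) :
  {morph f : x y / x + y >-> x * y} ->
  map_mx f (rv_kronsum d e) = rv_tens (map_mx f d) (map_mx f e).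
Proof. by move=> fD; apply/rowP => k; rewrite !mxE fD. Qed.

Lemma map_rv_tens m n (S : {pred C}) (f : C -> C) (d : 'rV[C]_m) (e : 'rV[C]_n) :
  {in S &, {morph f : x y / x * y >-> x + y}} ->
  (forall i, d 0 i \in S) -> (forall j, e 0 j \in S) ->
  map_mx f (rv_tens d e) = rv_kronsum (map_mx f d) (map_mx f e).
Proof. by move=> fM dS eS; apply/rowP => k; rewrite !mxE fM. Qed.

Lemma rv_tens_neq0 m n (d : 'rV[C]_m) (e : 'rV[C]_n) :
  (0 < m)%N -> (0 < n)%N -> (forall k, rv_tens d e 0 k != 0) ->
  (forall i, d 0 i != 0) /\ (forall j, e 0 j != 0).
Proof.
move=> m_gt0 n_gt0 de_neq0; split=> [i|j].
  have := de_neq0 (mxtens_index (i, Ordinal n_gt0)).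
  by rewrite rv_tensE mulf_eq0 negb_or => /andP[].
have := de_neq0 (mxtens_index (Ordinal m_gt0, j)).
by rewrite rv_tensE mulf_eq0 negb_or => /andP[].
Qed.

Lemma mxtrace_tens m n (A : 'M[C]_m) (B : 'M[C]_n) : \tr (A *t B) = \tr A * \tr B.
Proof. by rewrite /mxtrace mulr_sum; apply: eq_bigr => k _; rewrite mxE. Qed.

Lemma scale_tensmx m n p q (a b : C) (A : 'M[C]_(m, n)) (B : 'M[C]_(p, q)) :
  (a *: A) *t (b *: B) = (a * b) *: (A *t B).
Proof. by apply/matrixP => k l; rewrite !mxE mulrACA. Qed.

Definition trnorm n (A : 'M[C]_n) : 'M[C]_n := (\tr A)^-1 *: A.

Lemma prop_to_id_trnorm n (A : 'M[C]_n) :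
  \tr (trnorm A) = 1 -> prop_to_id (trnorm A) -> prop_to_id A.
Proof.
move=> tr1; apply: prop_to_idZ; apply: contra_eq_neq tr1 => trA_inv0.
by rewrite /trnorm trA_inv0 scale0r mxtrace0 eq_sym oner_neq0.
Qed.

Lemma trnorm_tens m n (A : 'M[C]_m) (B : 'M[C]_n) :
  trnorm (A *t B) = trnorm A *t trnorm B.
Proof. by rewrite /trnorm scale_tensmx mxtrace_tens invfM. Qed.

Lemma trnorm_unitary_conj n (U X : 'M[C]_n) :
  unitary U -> U *m trnorm X *m adjmx U = trnorm (U *m X *m adjmx U).
Proof. by move=> uU; rewrite /trnorm mxtrace_unitary_conj // -scalemxAr -scalemxAl. Qed.

(** * Operators diagonal in a unitary basis *)

Definition conj_diag n (P : 'M[C]_n) (d : 'rV[C]_n) : 'M[C]_n :=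
  adjmx P *m diag_mx d *m P.

Lemma conj_diagZ n (P : 'M[C]_n) (c : C) (d : 'rV[C]_n) :
  conj_diag P (c *: d) = c *: conj_diag P d.
Proof. by rewrite /conj_diag linearZ /= -scalemxAr -scalemxAl. Qed.

Lemma conj_diag_tens m n (P : 'M[C]_m) (Q : 'M[C]_n) (d : 'rV[C]_m) (e : 'rV[C]_n) :
  conj_diag P d *t conj_diag Q e = conj_diag (P *t Q) (rv_tens d e).
Proof. by rewrite /conj_diag -!tensmx_mul adjmx_tens diag_mx_tens. Qed.

Lemma conj_diag_kronsum m n (P : 'M[C]_m) (Q : 'M[C]_n) (d : 'rV[C]_m) (e : 'rV[C]_n) :
  unitary P -> unitary Q ->
  kronsum (conj_diag P d) (conj_diag Q e) = conj_diag (P *t Q) (rv_kronsum d e).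
Proof.
move=> [_ P2] [_ Q2].
rewrite /conj_diag -diag_mx_kronsum /kronsum adjmx_tens mulmxDr mulmxDl !tensmx_mul.
by rewrite !mulmx1 P2 Q2.
Qed.

Lemma conj_diagK n (P : 'M[C]_n) (d : 'rV[C]_n) :
  unitary P -> P *m conj_diag P d *m adjmx P = diag_mx d.
Proof. by move=> [P1 _]; rewrite /conj_diag !mulmxA P1 mul1mx -mulmxA P1 mulmx1. Qed.

Lemma conj_diag_scalarP n (P : 'M[C]_n) (d : 'rV[C]_n) (c : C) :
  unitary P -> conj_diag P d = c%:M <-> d = const_mx c.
Proof.
move=> uP; split=> [Ed|->]; last first.
  case: uP => _ P2.
  by rewrite /conj_diag diag_const_mx mul_mx_scalar -scalemxAl P2 scalemx1.
apply/rowP => k; have /matrixP/(_ k k) := conj_diagK d uP.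
rewrite Ed mul_mx_scalar -scalemxAl; case: uP => -> _.
by rewrite scalemx1 !mxE eqxx !mulr1n.
Qed.

Lemma mxtrace_conj_diag n (P : 'M[C]_n) (d : 'rV[C]_n) :
  unitary P -> \tr (conj_diag P d) = \sum_k d 0 k.
Proof.
case=> P1 _; rewrite /conj_diag mxtrace_mulC mulmxA P1 mul1mx.
by apply: eq_bigr => k _; rewrite mxE eqxx mulr1n.
Qed.

Lemma unitmx_conj_diag n (P : 'M[C]_n) (d : 'rV[C]_n) :
  unitary P -> (conj_diag P d \in unitmx) = [forall k, d 0 k != 0].
Proof.
move=> uP; rewrite !unitmx_mul (unitary_unit uP) (unitary_unit (unitary_adj uP)) andbT /=.
by rewrite unitmxE unitfE det_diag; apply/prodf_neq0/forallP => d_neq0 k //; apply: d_neq0.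
Qed.

Lemma conj_diag_hermitian n (P : 'M[C]_n) (d : 'rV[C]_n) :
  (forall k, d 0 k \is Num.real) -> Defs.hermitian (conj_diag P d).
Proof.
move=> d_real; rewrite /Defs.hermitian /conj_diag !adjmxM adjmxK adjmx_diag mulmxA.
by congr (_ *m diag_mx _ *m _); apply/rowP => k; rewrite mxE conj_Creal.
Qed.

Lemma conj_diag_psd n (P : 'M[C]_n) (d : 'rV[C]_n) :
  (forall k, 0 <= d 0 k) -> psd (conj_diag P d).
Proof.
move=> d_ge0; split; first by apply: conj_diag_hermitian => k; rewrite ger0_real.
move=> v; have -> : adjmx v *m conj_diag P d *m v = adjmx (P *m v) *m diag_mx d *m (P *m v).
  by rewrite /conj_diag adjmxM !mulmxA.
rewrite mxE; apply: sumr_ge0 => k _.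
by rewrite mul_mx_diag !mxE mulrAC mulr_ge0 // mulrC mul_conjC_ge0.
Qed.

Lemma diag_mx_intertwine m n (W : 'M[C]_(m, n)) (d : 'rV[C]_n) (e : 'rV[C]_m) (f : C -> C) :
  W *m diag_mx d = diag_mx e *m W ->
  W *m diag_mx (map_mx f d) = diag_mx (map_mx f e) *m W.
Proof.
move/matrixP => Wde; apply/matrixP => i j; move: (Wde i j).
rewrite !mul_mx_diag !mul_diag_mx !mxE.
have [->|Wij_neq0 Wdeij] := eqVneq (W i j) 0; first by move=> _; rewrite mulr0 mul0r.
by rewrite (mulfI Wij_neq0 (etrans Wdeij (mulrC _ _))) mulrC.
Qed.

Lemma conj_diag_intertwine m n (V : 'M[C]_(m, n)) (P : 'M[C]_n) (Q : 'M[C]_m)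
  (d : 'rV[C]_n) (e : 'rV[C]_m) (f : C -> C) :
  unitary P -> unitary Q -> V *m conj_diag P d = conj_diag Q e *m V ->
  V *m conj_diag P (map_mx f d) = conj_diag Q (map_mx f e) *m V.
Proof.
move=> [P1 P2] [Q1 Q2] VPQ; pose W := Q *m V *m adjmx P.
have WPQ : W *m diag_mx d = diag_mx e *m W.
  have : Q *m (V *m conj_diag P d) *m adjmx P = Q *m (conj_diag Q e *m V) *m adjmx P.
    by rewrite VPQ.
  by rewrite /conj_diag !mulmxA -!(mulmxA _ P) P1 !mulmx1 Q1 mul1mx.
have WfPQ := diag_mx_intertwine f WPQ.
have -> : V *m conj_diag P (map_mx f d) = adjmx Q *m (W *m diag_mx (map_mx f d)) *m P.
  by rewrite /W /conj_diag !mulmxA Q2 mul1mx.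
by rewrite WfPQ /W /conj_diag !mulmxA -(mulmxA _ (adjmx P)) P2 mulmx1.
Qed.

Lemma hermitian_conj_diag n (A : 'M[C]_n) : Defs.hermitian A ->
  exists (P : 'M[C]_n) (d : 'rV[C]_n),
    [/\ unitary P, forall k, d 0 k \is Num.real & A = conj_diag P d].
Proof.
move=> hA; have hsA : A \is hermsymmx.
  by apply/is_hermitianmxP; rewrite expr0 scale1r -{1}hA adjmxE.
have uS := spectral_unitarymx A; have Sinv := invmx_unitary uS.
exists (spectralmx A), (spectral_diag A); split.
- split; first by move/unitarymxP: uS; rewrite adjmxE.
  by rewrite adjmxE -Sinv mulVmx // unitarymx_unit.
- by move=> k; move/mxOverP: (hermitian_spectral_diag_real hsA); apply.
- by rewrite /conj_diag adjmxE -Sinv; apply/orthomx_spectralP/hermitian_normalmx.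
Qed.

Lemma psd_conj_diag n (A : 'M[C]_n) : psd A ->
  exists (P : 'M[C]_n) (d : 'rV[C]_n),
    [/\ unitary P, forall k, 0 <= d 0 k & A = conj_diag P d].
Proof.
move=> [hA A_ge0]; have [P [d [uP _ EA]]] := hermitian_conj_diag hA; subst A.
exists P, d; split=> // k; pose ek : 'cV[C]_n := delta_mx k 0.
have := A_ge0 (adjmx P *m ek).
have -> : adjmx (adjmx P *m ek) *m conj_diag P d *m (adjmx P *m ek)
    = adjmx ek *m (P *m conj_diag P d *m adjmx P) *m ek.
  by rewrite adjmxM adjmxK !mulmxA.
have -> : adjmx ek = delta_mx 0 k.
  by apply/matrixP => i j; rewrite /ek !mxE rmorph_nat andbC.
by rewrite conj_diagK // -rowE row_diag_mx -scalemxAl mul_delta_mx !mxE !eqxx mulr1.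
Qed.

Lemma posdef_conj_diag n (A : 'M[C]_n) : psd A -> A \in unitmx ->
  exists (P : 'M[C]_n) (d : 'rV[C]_n),
    [/\ unitary P, forall k, 0 < d 0 k & A = conj_diag P d].
Proof.
move=> /psd_conj_diag[P [d [uP d_ge0 ->]]].
rewrite unitmx_conj_diag // => /forallP d_neq0.
by exists P, d; split=> // k; rewrite lt0r d_neq0 d_ge0.
Qed.

Lemma hermitian_tensmx_unit m n (A : 'M[C]_m) (B : 'M[C]_n) :
  (0 < m)%N -> (0 < n)%N -> Defs.hermitian A -> Defs.hermitian B ->
  A *t B \in unitmx -> A \in unitmx /\ B \in unitmx.
Proof.
move=> m_gt0 n_gt0 /hermitian_conj_diag[P [d [uP _ ->]]].
move=> /hermitian_conj_diag[Q [e [uQ _ ->]]].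
rewrite conj_diag_tens (unitmx_conj_diag _ (unitary_tens uP uQ)) => /forallP.
move=> /(rv_tens_neq0 m_gt0 n_gt0)[d_neq0 e_neq0].
by rewrite !unitmx_conj_diag //; split; apply/forallP.
Qed.

Lemma prop_to_id_map_conj_diag n (P : 'M[C]_n) (d : 'rV[C]_n) (S : {pred C}) (f : C -> C) :
  unitary P -> {in S &, injective f} -> (forall k, d 0 k \in S) ->
  prop_to_id (conj_diag P (map_mx f d)) -> prop_to_id (conj_diag P d).
Proof.
case: n P d => [|n] P d uP f_inj dS [c /(conj_diag_scalarP _ _ uP) /rowP fd].
  by exists 0; apply/matrixP => -[].
exists (d 0 0); apply/(conj_diag_scalarP _ _ uP)/rowP => k; rewrite mxE.
by apply: f_inj => //; have := fd k; have := fd 0; rewrite !mxE => -> ->.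
Qed.

Lemma density_trnorm_conj_diag n (P : 'M[C]_n) (d : 'rV[C]_n) :
  (0 < n)%N -> unitary P -> (forall k, 0 < d 0 k) ->
  density (trnorm (conj_diag P d)) /\ full_rank (trnorm (conj_diag P d)).
Proof.
move=> n_gt0 uP d_gt0; set s := \sum_k d 0 k.
have s_gt0 : 0 < s.
  rewrite /s (bigD1 (Ordinal n_gt0)) //=; apply: ltr_wpDr (d_gt0 _).
  by apply: sumr_ge0 => k _; apply: ltW.
have -> : trnorm (conj_diag P d) = conj_diag P (s^-1 *: d).
  by rewrite /trnorm mxtrace_conj_diag // conj_diagZ.
split; [split|].
- by apply: conj_diag_psd => k; rewrite mxE mulr_ge0 ?invr_ge0 ?ltW.
- rewrite mxtrace_conj_diag // -(mulVf (lt0r_neq0 s_gt0)) mulr_sumr.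
  by apply: eq_bigr => k _; rewrite mxE.
- apply/full_rank_unitmx; rewrite unitmx_conj_diag //; apply/forallP => k.
  by rewrite mxE mulf_neq0 ?invr_eq0 ?lt0r_neq0.
Qed.

Section KronsumIntertwining.
Variables (m n : nat) (U : 'M[C]_(m * n)) (Pa Pa' : 'M[C]_m) (Pb Pb' : 'M[C]_n).
Hypotheses (uU : unitary U) (uPa : unitary Pa) (uPa' : unitary Pa').
Hypotheses (uPb : unitary Pb) (uPb' : unitary Pb').

Lemma unitary_conj_kronsum_tens (f : C -> C) (a a' : 'rV[C]_m) (b b' : 'rV[C]_n) :
  {morph f : x y / x + y >-> x * y} ->
  U *m kronsum (conj_diag Pa a) (conj_diag Pb b) *m adjmx U
    = kronsum (conj_diag Pa' a') (conj_diag Pb' b') ->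
  U *m (conj_diag Pa (map_mx f a) *t conj_diag Pb (map_mx f b)) *m adjmx U
    = conj_diag Pa' (map_mx f a') *t conj_diag Pb' (map_mx f b').
Proof.
move=> fD /(unitary_conjP _ _ uU) UH; apply/(unitary_conjP _ _ uU).
rewrite !conj_diag_tens -!map_rv_kronsum //.
apply: (conj_diag_intertwine _ (unitary_tens uPa uPb) (unitary_tens uPa' uPb')).
by rewrite -!conj_diag_kronsum.
Qed.

Lemma unitary_conj_tens_kronsum (S : {pred C}) (f : C -> C)
    (a a' : 'rV[C]_m) (b b' : 'rV[C]_n) :
  {in S &, {morph f : x y / x * y >-> x + y}} ->
  (forall i, a 0 i \in S) -> (forall i, a' 0 i \in S) ->
  (forall j, b 0 j \in S) -> (forall j, b' 0 j \in S) ->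
  U *m (conj_diag Pa a *t conj_diag Pb b) *m adjmx U
    = conj_diag Pa' a' *t conj_diag Pb' b' ->
  U *m kronsum (conj_diag Pa (map_mx f a)) (conj_diag Pb (map_mx f b)) *m adjmx U
    = kronsum (conj_diag Pa' (map_mx f a')) (conj_diag Pb' (map_mx f b')).
Proof.
move=> fM aS a'S bS b'S /(unitary_conjP _ _ uU) UH; apply/(unitary_conjP _ _ uU).
rewrite !conj_diag_kronsum // -(map_rv_tens fM aS bS) -(map_rv_tens fM a'S b'S).
apply: (conj_diag_intertwine _ (unitary_tens uPa uPb) (unitary_tens uPa' uPb')).
by rewrite -!conj_diag_tens.
Qed.

End KronsumIntertwining.

End Operators.

(** * Thermal and logarithmic operators over [R[i]] *)

Section ThermalStates.
Variable R : realType.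
Local Notation C := R[i].

Definition expRe (z : C) : C := (expR (complex.Re z))%:C.
Definition lnRe (z : C) : C := (ln (complex.Re z))%:C.

Lemma Re_gt0 (x : C) : 0 < x -> 0 < complex.Re x.
Proof. by rewrite ltcE => /andP[]. Qed.

Lemma real_complex_real (r : R) : r%:C \is Num.real.
Proof. by rewrite complex_real. Qed.

Lemma expReD : {morph expRe : x y / x + y >-> x * y}.
Proof. by move=> x y; rewrite /expRe raddfD /= expRD rmorphM. Qed.

Lemma expRe_gt0 x : 0 < expRe x.
Proof. by rewrite ltcR expR_gt0. Qed.

Lemma expRe_inj : {in Num.real &, injective expRe}.
Proof.
move=> x y x_real y_real /complexI/expR_inj Rexy.
by rewrite -(RRe_real x_real) -(RRe_real y_real) Rexy.
Qed.

Lemma lnReM : {in Num.pos &, {morph lnRe : x y / x * y >-> x + y}}.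
Proof.
move=> x y; rewrite !posrE => x_gt0 y_gt0.
rewrite /lnRe -(RRe_real (gtr0_real x_gt0)) -(RRe_real (gtr0_real y_gt0)).
by rewrite -rmorphM /= lnM ?posrE ?Re_gt0 // rmorphD.
Qed.

Lemma lnRe_inj : {in Num.pos &, injective lnRe}.
Proof.
move=> x y; rewrite !posrE => x_gt0 y_gt0 /complexI lnxy.
have Rexy : complex.Re x = complex.Re y by apply: ln_inj lnxy; rewrite posrE Re_gt0.
by rewrite -(RRe_real (gtr0_real x_gt0)) -(RRe_real (gtr0_real y_gt0)) Rexy.
Qed.

(* The Gibbs state of [conj_diag P h] at inverse temperature [-1]; any fixed
   nonzero temperature would do. *)
Definition gibbs n (P : 'M[C]_n) (h : 'rV[C]_n) : 'M[C]_n :=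
  trnorm (conj_diag P (map_mx expRe h)).

Definition logmx n (P : 'M[C]_n) (d : 'rV[C]_n) : 'M[C]_n :=
  conj_diag P (map_mx lnRe d).

Lemma gibbs_density n (P : 'M[C]_n) (h : 'rV[C]_n) :
  (0 < n)%N -> unitary P -> density (gibbs P h) /\ full_rank (gibbs P h).
Proof.
by move=> n_gt0 uP; apply: density_trnorm_conj_diag => // k; rewrite mxE expRe_gt0.
Qed.

Lemma gibbs_maximally_mixed n (P : 'M[C]_n) (h : 'rV[C]_n) :
  (0 < n)%N -> unitary P -> (forall k, h 0 k \is Num.real) ->
  maximally_mixed (gibbs P h) -> prop_to_id (conj_diag P h).
Proof.
move=> n_gt0 uP h_real mm; have [[_ tr1] _] := gibbs_density h n_gt0 uP.
apply: (prop_to_id_map_conj_diag uP expRe_inj h_real).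
by apply: prop_to_id_trnorm tr1 _; exists n%:R^-1.
Qed.

Lemma logmx_hermitian n (P : 'M[C]_n) (d : 'rV[C]_n) : Defs.hermitian (logmx P d).
Proof. by apply: conj_diag_hermitian => k; rewrite mxE real_complex_real. Qed.

Lemma logmx_maximally_mixed n (P : 'M[C]_n) (d : 'rV[C]_n) :
  unitary P -> (forall k, 0 < d 0 k) -> \tr (conj_diag P d) = 1 ->
  prop_to_id (logmx P d) -> maximally_mixed (conj_diag P d).
Proof.
move=> uP d_gt0 tr1 /(prop_to_id_map_conj_diag uP lnRe_inj) scalar_d.
by apply: scalar_maximally_mixed tr1 (scalar_d _) => k; rewrite posrE.
Qed.

Lemma gen_thermal_unitary_product_states m n (U : 'M[C]_(m * n)) :
  (0 < m)%N -> (0 < n)%N -> unitary U -> gen_thermal_unitary U ->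
  exists (alpha alpha' : 'M[C]_m) (beta beta' : 'M[C]_n),
    density alpha /\ full_rank alpha /\ density beta /\ full_rank beta /\
    ~ (maximally_mixed alpha /\ maximally_mixed beta) /\
    density alpha' /\ density beta' /\
    U *m (alpha *t beta) *m adjmx U = alpha' *t beta'.
Proof.
move=> m_gt0 n_gt0 uU [HA [HA' [HB [HB' [hA [hA' [hB [hB' []]]]]]]]].
have [Pa [a [uPa a_real ->]]] := hermitian_conj_diag hA.
have [Pa' [a' [uPa' _ ->]]] := hermitian_conj_diag hA'.
have [Pb [b [uPb b_real ->]]] := hermitian_conj_diag hB.
have [Pb' [b' [uPb' _ ->]]] := hermitian_conj_diag hB'.
move=> not_scalar /(unitary_conj_kronsum_tens uU uPa uPa' uPb uPb' expReD) UE.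
exists (gibbs Pa a), (gibbs Pa' a'), (gibbs Pb b), (gibbs Pb' b').
have [dA fA] := gibbs_density a m_gt0 uPa; have [dA' _] := gibbs_density a' m_gt0 uPa'.
have [dB fB] := gibbs_density b n_gt0 uPb; have [dB' _] := gibbs_density b' n_gt0 uPb'.
do 4 split=> //; split.
  move=> [/(gibbs_maximally_mixed m_gt0 uPa a_real) scalarA].
  move=> /(gibbs_maximally_mixed n_gt0 uPb b_real) scalarB.
  by case: not_scalar.
do 2 split=> //.
by rewrite /gibbs -!trnorm_tens trnorm_unitary_conj // UE.
Qed.

Lemma product_states_gen_thermal_unitary m n (U : 'M[C]_(m * n))
    (alpha alpha' : 'M[C]_m) (beta beta' : 'M[C]_n) :
  (0 < m)%N -> (0 < n)%N -> unitary U ->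
  density alpha -> full_rank alpha -> density beta -> full_rank beta ->
  ~ (maximally_mixed alpha /\ maximally_mixed beta) ->
  density alpha' -> density beta' ->
  U *m (alpha *t beta) *m adjmx U = alpha' *t beta' -> gen_thermal_unitary U.
Proof.
move=> m_gt0 n_gt0 uU [psdA trA] /full_rank_unitmx unitA [psdB trB] /full_rank_unitmx unitB.
move=> not_mm [psdA' trA'] [psdB' trB'] UE.
have [unitA' unitB'] : alpha' \in unitmx /\ beta' \in unitmx.
  apply: hermitian_tensmx_unit psdA'.1 psdB'.1 _ => //.
  rewrite -UE !unitmx_mul (unitary_unit uU) (unitary_unit (unitary_adj uU)) andbT /=.
  by apply: tensmx_unit; rewrite // -lt0n.
have [Pa [a [uPa a_gt0 EA]]] := posdef_conj_diag psdA unitA.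
have [Pa' [a' [uPa' a'_gt0 EA']]] := posdef_conj_diag psdA' unitA'.
have [Pb [b [uPb b_gt0 EB]]] := posdef_conj_diag psdB unitB.
have [Pb' [b' [uPb' b'_gt0 EB']]] := posdef_conj_diag psdB' unitB'.
subst alpha alpha' beta beta'.
exists (logmx Pa a), (logmx Pa' a'), (logmx Pb b), (logmx Pb' b').
do 4 (split; first exact: logmx_hermitian).
split.
  have [mmA|not_mmA] := eqVneq (conj_diag Pa a) (m%:R^-1)%:M.
    by right=> /(logmx_maximally_mixed uPb b_gt0 trB) mmB; apply: not_mm.
  by left=> /(logmx_maximally_mixed uPa a_gt0 trA) mmA; rewrite mmA eqxx in not_mmA.
have pos k (d : 'rV[C]_k) : (forall i, 0 < d 0 i) -> forall i, d 0 i \in Num.pos.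
  by move=> d_gt0 i; rewrite posrE.
exact: (unitary_conj_tens_kronsum uU uPa uPa' uPb uPb' lnReM (pos _ _ a_gt0)
  (pos _ _ a'_gt0) (pos _ _ b_gt0) (pos _ _ b'_gt0) UE).
Qed.

End ThermalStates.

Theorem theorem1 (R : realType) (m n : nat) (Hm : (0 < m)%N) (Hn : (0 < n)%N)
  (U : 'M[R[i]]_(m * n)) (HU : unitary U) :
  gen_thermal_unitary U <->
  exists (alpha alpha' : 'M[R[i]]_m) (beta beta' : 'M[R[i]]_n),
    density alpha /\ full_rank alpha /\ density beta /\ full_rank beta /\
    ~ (maximally_mixed alpha /\ maximally_mixed beta) /\
    density alpha' /\ density beta' /\
    U *m (alpha *t beta) *m adjmx U = alpha' *t beta'.
Proof.
split; first exact: gen_thermal_unitary_product_states.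
move=> [alpha [alpha' [beta [beta' [dA [fA [dB [fB [not_mm [dA' [dB' UE]]]]]]]]]]].
exact: (product_states_gen_thermal_unitary Hm Hn HU dA fA dB fB not_mm dA' dB' UE).
Qed.
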